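(* Let $k, r, a, b, m, n$ be integers satisfying $$k\geq 1,\quad 0\leq a\leq m,\quad \max\{0,ka-r\}<b\leq n,\quad n>km-r.$$ Let $\mathcal{L}_{k,r}(a,b;m,n)$ be the set of lattice paths from $(a,b)$ to $(m,n)$ with unit steps $(1,0)$ and $(0,1)$ that stay strictly above the line $y=kx-r$. Then $$|\mathcal{L}_{k,r}(a,b;m,n)|=\sum_{i=0}^{\lfloor\frac{b+r-1-ka}{k+1}\rfloor}(-1)^i\,\frac{n+r-km}{m+n+r-(k+1)(a+i)}\binom{m+n+r-(k+1)(a+i)}{m-a-i}\binom{b+r-1-k(a+i)}{i}.$$
   Context: A path stays strictly above the line $y=kx-r$ if every lattice point $(x,y)$ on it satisfies $y> kx-r$. $\lfloor x\rfloor$ is the floor function. Binomial coefficients $\binom{N}{j}$ with $N\ge0$ equal $0$ when $j<0$ or $j>N$. *)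

From HB Require Import structures.
From mathcomp Require Import all_boot all_order all_algebra.
Set Implicit Arguments. Unset Strict Implicit. Unset Printing Implicit Defensive.
Import Order.TTheory GRing.Theory Num.Theory.
Local Open Scope ring_scope.

(* A lattice path is encoded by its sequence of unit steps:
   true = (1,0) (east), false = (0,1) (north). *)

Fixpoint path_end (x y : int) (s : seq bool) : int * int :=
  match s with
  | [::] => (x, y)
  | st :: s' => if st then path_end (x + 1) y s' else path_end x (y + 1) s'
  end.

Fixpoint strictly_above (k r x y : int) (s : seq bool) : bool :=
  (k * x - r < y) &&
  match s with
  | [::] => true
  | st :: s' => if st then strictly_above k r (x + 1) y s'
                else strictly_above k r x (y + 1) s'
  end.

Definition nsteps (a b m n : int) : nat := `|m - a|%N + `|n - b|%N.

Definition Lpaths (k r a b m n : int) : {set (nsteps a b m n).-tuple bool} :=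
  [set t : (nsteps a b m n).-tuple bool |
     (path_end a b t == (m, n)) && strictly_above k r a b t].

(* binomial coefficient with integer arguments, for N >= 0;
   equals 0 when j < 0 or j > N (value for N < 0 is irrelevant here). *)
Definition binz (N j : int) : int :=
  if (0 <= N) && (0 <= j) then ('C(`|N|, `|j|))%:Z else 0.

(* Let c(x, y) be the number of admissible paths from (x, y) to (m, n).  It vanishes on or below
   the line, equals 1 at (m, n), and satisfies c(x, y) = c(x + 1, y) + c(x, y + 1) at every other
   point strictly above the line.  The right-hand side, read as a function of the starting point,
   is an alternating sum of products of generalized ballot numbers
   (q - k p)/(p + q) * C(p + q, p) = C(p + q, p) - (k + 1) C(p + q - 1, p - 1)
   with binomials C(d - k i, i).  Both factors obey Pascal's rule, and the ballot numbers vanish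
   on the line q = k p, so the sum satisfies the same recursion and boundary values; induction on
   the length of the path gives the identity. *)

From HB Require Import structures.
From mathcomp Require Import all_boot all_order all_algebra.
From mathcomp Require Import ring zify.
Import Order.TTheory GRing.Theory Num.Theory.
Local Open Scope ring_scope.

Lemma big_ord_trunc (V : nmodType) (f : nat -> V) n1 n2 :
  (forall i, (n1 <= i)%N -> f i = 0) -> (forall i, (n2 <= i)%N -> f i = 0) ->
  \sum_(i < n1) f i = \sum_(i < n2) f i.
Proof.
have widen n : (n <= n1 + n2)%N -> (forall i, (n <= i)%N -> f i = 0) ->
    \sum_(i < n) f i = \sum_(i < n1 + n2) f i.
  move=> n_le f_eq0; rewrite (big_ord_widen _ _ n_le) big_mkcond; apply: eq_bigr => i _.
  by case: ifP => // /negbT; rewrite -leqNgt => /f_eq0.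
by move=> f1 f2; rewrite (widen n1) ?(widen n2) ?leq_addr ?leq_addl.
Qed.

Lemma card_tuple_cons l (P : pred (seq bool)) :
  #|[set t : l.+1.-tuple bool | P t]| =
  (#|[set t : l.-tuple bool | P (true :: t)]| + #|[set t : l.-tuple bool | P (false :: t)]|)%N.
Proof.
have cons_inj b : injective (@cons_tuple l bool b) by move=> t u /(congr1 val) [] /val_inj.
have mem_cons b c t (B : {set l.-tuple bool}) :
    (cons_tuple b t \in cons_tuple c @: B) = (b == c) && (t \in B).
  apply/imsetP/andP => [[u uB /(congr1 val) [-> /val_inj ->]] | [/eqP -> tB]] //.
  by exists t.
pose A b := [set t : l.-tuple bool | P (b :: t)].
have -> : [set t : l.+1.-tuple bool | P t] = cons_tuple true @: A true :|: cons_tuple false @: A false.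
  by apply/setP => t; case/tupleP: t => b t; rewrite !inE !mem_cons !inE; case: b; rewrite ?orbF.
rewrite cardsU !card_imset // (_ : _ :&: _ = set0) ?cards0 ?subn0 //.
by apply/setP => t; case/tupleP: t => b t; rewrite !inE !mem_cons; case: b; rewrite ?andbF.
Qed.

Lemma subzS1 (n : nat) : n.+1%:Z - 1 = n.
Proof. by rewrite -addn1 PoszD addrK. Qed.

Lemma binz_nat (N j : nat) : binz N j = 'C(N, j).
Proof. by []. Qed.

Lemma binz_upper_neg N j : N < 0 -> binz N j = 0.
Proof. by rewrite /binz => N_lt0; rewrite leNgt N_lt0. Qed.

Lemma binz_lower_neg N j : j < 0 -> binz N j = 0.
Proof. by rewrite /binz => j_lt0; rewrite (leNgt 0 j) j_lt0 andbF. Qed.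

Lemma binz_small N j : N < j -> binz N j = 0.
Proof.
have [/binz_upper_neg -> //|] := ltP N 0.
case: N => // N _; case: j => [j|j] ltNj; last exact: binz_lower_neg.
by rewrite binz_nat bin_small // -ltz_nat.
Qed.

Lemma binz0 N : 0 <= N -> binz N 0 = 1.
Proof. by case: N => // N _; rewrite (binz_nat N 0) bin0. Qed.

(* Pascal's rule fails only at [binz 0 0 = 1]. *)
Lemma binz_pascal N j : (N = -1 -> j != 0) ->
  binz (N + 1) j = binz N j + binz N (j - 1).
Proof.
case: j => [[|j]|j] not00; last by rewrite !binz_lower_neg //; lia.
- have {}not00 : N <> -1 by move/not00.
  have [N_ge0|N_lt0] := leP 0 N; first by rewrite !binz0 ?binz_lower_neg ?addr0 //; lia.
  by rewrite !binz_upper_neg //; lia.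
- have [N_ge0|N_lt0] := leP 0 N; last by rewrite binz_small ?binz_upper_neg //; lia.
  case: N N_ge0 {not00} => // N _.
  by rewrite subzS1 -PoszD addn1 !binz_nat binS PoszD addrC.
Qed.

Lemma mul_binz_diag N j : 1 <= N -> N * binz (N - 1) (j - 1) = j * binz N j.
Proof.
case: j => [[|j]|j] N_ge1; last by rewrite !binz_lower_neg ?mulr0 //; lia.
  by rewrite binz_lower_neg ?mulr0 ?mul0r.
case: N N_ge1 => // [[|N]] // _.
by rewrite !subzS1 !binz_nat -!PoszM mul_bin_diag.
Qed.

Definition ballot (k p q : int) : int :=
  binz (p + q) p - (k + 1) * binz (p + q - 1) (p - 1).

Lemma ballot_neg k p q : p < 0 -> ballot k p q = 0.
Proof. by move=> p_lt0; rewrite /ballot !binz_lower_neg ?mulr0 ?subr0 //; lia. Qed.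

Lemma ballotE k p q : 0 <= k -> 1 <= q - k * p ->
  (q - k * p)%:~R / (p + q)%:~R * (binz (p + q) p)%:~R = (ballot k p q)%:~R :> rat.
Proof.
move=> k_ge0 above.
have [p_lt0|p_ge0] := ltP p 0; first by rewrite ballot_neg // binz_lower_neg // mulr0.
have pq_gt0 : 0 < p + q by nia.
have cross : (q - k * p) * binz (p + q) p = ballot k p q * (p + q).
  have -> : ballot k p q * (p + q) =
      binz (p + q) p * (p + q) - (k + 1) * ((p + q) * binz (p + q - 1) (p - 1)).
    by rewrite /ballot; ring.
  by rewrite mul_binz_diag //; ring.
by rewrite mulrAC -intrM cross intrM mulfK // intr_eq0 gt_eqF.
Qed.

Lemma ballot_pascal k p q : 0 <= k -> 1 <= q - k * p ->
  ballot k p q = ballot k (p - 1) q + ballot k p (q - 1).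
Proof.
move=> k_ge0 above.
have pascal1 : binz (p + q) p = binz (p + q - 1) p + binz (p + q - 1) (p - 1).
  rewrite -binz_pascal ?subrK // => pq1; apply/eqP => p0; move: above; rewrite p0; lia.
have pascal2 : binz (p + q - 1) (p - 1) =
    binz (p + q - 1 - 1) (p - 1) + binz (p + q - 1 - 1) (p - 1 - 1).
  rewrite -binz_pascal ?subrK // => pq2; apply/eqP => p1.
  have p_eq1 : p = 1 by lia.
  by move: above; rewrite p_eq1; lia.
rewrite /ballot pascal1 pascal2.
have -> : p - 1 + q = p + q - 1 by ring.
have -> : p + (q - 1) = p + q - 1 by ring.
by rewrite pascal2; ring.
Qed.

Lemma ballot_on_line k p : 0 <= k -> 0 < p -> ballot k p (k * p) = 0.
Proof.
move=> k_ge0 p_gt0; apply/eqP; rewrite subr_eq0; apply/eqP.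
by apply: (mulfI (lt0r_neq0 p_gt0)); rewrite -mul_binz_diag; [ring | nia].
Qed.

(* With [M = m - x], [N = n - y] and [d = y + r - 1 - k x], this is the right-hand side of the
   theorem for paths starting at [(x, y)]; note [N + d + 1 - k i = n + r - k (x + i)]. *)
Definition ballot_sum (k : int) (M : nat) (N d : int) : int :=
  \sum_(i < M.+1)
    (-1) ^+ i * ballot k (M%:Z - i%:Z) (N + d + 1 - k * i%:Z) * binz (d - k * i%:Z) i%:Z.

Lemma ballot_sum_M0 k N d : 0 <= d -> 0 <= N + d + 1 -> ballot_sum k 0 N d = 1.
Proof.
move=> d_ge0 NdS_ge0; rewrite /ballot_sum big_ord1 /= /ballot !mulr0 !subr0 !add0r.
by rewrite !binz0 // binz_lower_neg ?mulr0 ?subr0 ?mulr1.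
Qed.

Lemma ballot_sum_below k M N d : 0 <= k -> d < 0 -> ballot_sum k M N d = 0.
Proof.
by move=> k_ge0 d_lt0; rewrite /ballot_sum big1 // => i _; rewrite binz_upper_neg ?mulr0 //; nia.
Qed.

Lemma ballot_sum_on_line k M N d : 0 <= k -> -1 <= N -> (0 < M)%N -> N + d + 1 = k * M%:Z ->
  ballot_sum k M N d = 0.
Proof.
move=> k_ge0 N_ge_1 M_gt0 on_line; rewrite /ballot_sum big_ord_recr /= big1 ?add0r.
  by rewrite binz_small ?mulr0 //; lia.
move=> i _ /=; have i_lt_M := ltn_ord i.
have -> : N + d + 1 - k * i%:Z = k * (M%:Z - i%:Z) by rewrite mulrBr -on_line.
by rewrite ballot_on_line ?mulr0 ?mul0r //; lia.
Qed.

(* The path recursion: an east step turns [(M+1, d)] into [(M, d - k)], a north step turns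
   [(N, d)] into [(N - 1, d + 1)].  Pascal's rule on the inner binomials, followed by the index
   shift [i -> i + 1] in the second half, produces the east-step sum. *)
Lemma ballot_sum_step k M N d : 0 <= d ->
  ballot_sum k M.+1 N d = ballot_sum k M N (d - k) + ballot_sum k M.+1 (N - 1) (d + 1).
Proof.
move=> d_ge0; rewrite /ballot_sum.
have pascal (i : nat) :
  (-1) ^+ i * ballot k (M.+1%:Z - i%:Z) (N - 1 + (d + 1) + 1 - k * i%:Z) *
    binz (d + 1 - k * i%:Z) i%:Z =
  (-1) ^+ i * ballot k (M.+1%:Z - i%:Z) (N + d + 1 - k * i%:Z) * binz (d - k * i%:Z) i%:Z +
  (-1) ^+ i * ballot k (M.+1%:Z - i%:Z) (N + d + 1 - k * i%:Z) * binz (d - k * i%:Z) (i%:Z - 1).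
  have -> : N - 1 + (d + 1) + 1 - k * i%:Z = N + d + 1 - k * i%:Z by ring.
  have -> : d + 1 - k * i%:Z = (d - k * i%:Z) + 1 by ring.
  rewrite binz_pascal; first by ring.
  by case: i => [|i] //; rewrite mulr0 subr0; lia.
under [X in _ = _ + X]eq_bigr do rewrite pascal.
rewrite big_split /= [X in _ = _ + (_ + X)]big_ord_recl /= binz_lower_neg // mulr0 add0r.
rewrite addrCA -big_split /= [X in _ = _ + X]big1 ?addr0 // => j _.
rewrite /bump leq0n add1n !intS exprS.
have -> : 1 + M%:Z - (1 + j%:Z) = M%:Z - j%:Z by ring.
have -> : N + (d - k) + 1 - k * j%:Z = N + d + 1 - k * (1 + j%:Z) by ring.
have -> : d - k - k * j%:Z = d - k * (1 + j%:Z) by ring.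
have -> : 1 + j%:Z - 1 = j%:Z by ring.
ring.
Qed.

Lemma ballot_sum_pascal k M N d : 0 <= k -> 1 <= N + d + 1 - k * M.+1%:Z ->
  ballot_sum k M.+1 N d = ballot_sum k M N d + ballot_sum k M.+1 (N - 1) d.
Proof.
move=> k_ge0 above; rewrite /ballot_sum.
have pascal (i : nat) :
  (-1) ^+ i * ballot k (M.+1%:Z - i%:Z) (N + d + 1 - k * i%:Z) * binz (d - k * i%:Z) i%:Z =
  (-1) ^+ i * ballot k (M%:Z - i%:Z) (N + d + 1 - k * i%:Z) * binz (d - k * i%:Z) i%:Z +
  (-1) ^+ i * ballot k (M.+1%:Z - i%:Z) (N - 1 + d + 1 - k * i%:Z) * binz (d - k * i%:Z) i%:Z.
  rewrite ballot_pascal //; last by lia.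
  have -> : M.+1%:Z - i%:Z - 1 = M%:Z - i%:Z by lia.
  have -> : N - 1 + d + 1 - k * i%:Z = N + d + 1 - k * i%:Z - 1 by ring.
  ring.
under eq_bigr do rewrite pascal.
rewrite big_split /= big_ord_recr /= ballot_neg; first by rewrite mulr0 mul0r addr0.
by lia.
Qed.

Lemma ballot_sum_last_row k M d : 0 <= k -> k * M%:Z <= d -> ballot_sum k M 0 d = 1.
Proof.
move=> k_ge0; elim: M d => [|M IH] d d_ge; first by apply: ballot_sum_M0; lia.
have IH' e : k * M.+1%:Z - k <= e -> ballot_sum k M 0 e = 1.
  by move=> e_ge; apply: IH; lia.
have [e -> {d d_ge}] : exists e : nat, d = k * M.+1%:Z + e%:Z.
  by exists `|(d - k * M.+1%:Z)%R|%N; rewrite gez0_abs; [ring | lia].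
elim: e => [|e IHe].
  rewrite addr0 ballot_sum_pascal //; last by lia.
  rewrite (@ballot_sum_on_line k M.+1 (0 - 1)) //; last by lia.
  by rewrite addr0 IH'; lia.
have north_eq0 : ballot_sum k M.+1 (0 - 1) (k * M.+1%:Z + e%:Z + 1) = 0.
  have := @ballot_sum_step k M 0 (k * M.+1%:Z + e%:Z); rewrite IHe IH'; last by lia.
  by move=> step; apply: (addrI 1); rewrite addr0 -step //; nia.
rewrite (intS e) (addrC 1) addrA ballot_sum_pascal //; last by nia.
by rewrite north_eq0 addr0 IH'; lia.
Qed.

Lemma ballot_sumE k M N d : 0 <= k -> 0 <= d -> 1 <= N + d + 1 - k * M%:Z ->
  (ballot_sum k M N d)%:~R =
  \sum_(i < `|(d %/ (k + 1))%Z|%N.+1)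
    (-1) ^+ i * ((N + d + 1 - k * M%:Z)%:~R / (M%:Z - i%:Z + (N + d + 1 - k * i%:Z))%:~R) *
    (binz (M%:Z - i%:Z + (N + d + 1 - k * i%:Z)) (M%:Z - i%:Z))%:~R *
    (binz (d - k * i%:Z) i%:Z)%:~R :> rat.
Proof.
move=> k_ge0 d_ge0 above; rewrite /ballot_sum rmorph_sum /=.
pose g (i : nat) : rat :=
  (-1) ^+ i * ((N + d + 1 - k * M%:Z)%:~R / (M%:Z - i%:Z + (N + d + 1 - k * i%:Z))%:~R) *
  (binz (M%:Z - i%:Z + (N + d + 1 - k * i%:Z)) (M%:Z - i%:Z))%:~R *
  (binz (d - k * i%:Z) i%:Z)%:~R.
transitivity (\sum_(i < M.+1) g i).
  apply: eq_bigr => i _.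
  have on_line : N + d + 1 - k * i%:Z - k * (M%:Z - i%:Z) = N + d + 1 - k * M%:Z by ring.
  by rewrite /g !intrM intr_sign -ballotE ?on_line ?mulrA.
apply: (@big_ord_trunc _ g) => i i_ge; rewrite /g.
  by rewrite binz_lower_neg ?mulr0 ?mul0r //; lia.
rewrite [binz (d - _) _]binz_small ?mulr0 //.
have : ((d %/ (k + 1))%Z < i%:Z) by rewrite -[(d %/ (k + 1))%Z]gez0_abs ?ltz_nat // divz_ge0 //; lia.
by rewrite ltz_divLR; lia.
Qed.

Definition admissible (k r m n x y : int) (s : seq bool) : bool :=
  (path_end x y s == (m, n)) && strictly_above k r x y s.

Definition npaths (k r m n : int) (l : nat) (x y : int) : nat :=
  #|[set t : l.-tuple bool | admissible k r m n x y t]|.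

Lemma admissible_cons k r m n x y (st : bool) s :
  admissible k r m n x y (st :: s) =
  (k * x - r < y) && admissible k r m n (if st then x + 1 else x) (if st then y else y + 1) s.
Proof. by case: st; rewrite /admissible /= andbCA. Qed.

Lemma npaths0 k r m n x y :
  npaths k r m n 0 x y = [&& x == m, y == n & k * x - r < y].
Proof.
have admissible0 (t : 0.-tuple bool) : admissible k r m n x y t = [&& x == m, y == n & k * x - r < y].
  by rewrite (tuple0 t) /admissible /= andbT xpair_eqE andbA.
rewrite /npaths; under eq_finset => t do rewrite admissible0.
by case: [&& _, _ & _]; rewrite ?cardsT ?card_tuple ?cards0.
Qed.

Lemma npathsS k r m n l x y :
  npaths k r m n l.+1 x y =
  if k * x - r < y then (npaths k r m n l (x + 1) y + npaths k r m n l x (y + 1))%N else 0%N.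
Proof.
rewrite /npaths card_tuple_cons; case: ifP => above.
  by congr (_ + _)%N; apply: eq_card => t; rewrite !inE admissible_cons above.
by rewrite !eq_card0 // => t; rewrite !inE admissible_cons above.
Qed.

Lemma path_end_ge x y s : x <= (path_end x y s).1 /\ y <= (path_end x y s).2.
Proof.
elim: s x y => [|[] s IH] x y //=.
- by have [] := IH (x + 1) y; split => //; lia.
- by have [] := IH x (y + 1); split => //; lia.
Qed.

Lemma npaths_beyond k r m n l x y : (m < x) || (n < y) -> npaths k r m n l x y = 0%N.
Proof.
move=> beyond; apply/eqP; rewrite cards_eq0; apply/eqP/setP => t; rewrite !inE /admissible.
have [] := path_end_ge x y t; case: path_end => u v /= xu yv.
by rewrite xpair_eqE; apply/negbTE; apply: contraL beyond => /andP [/andP [/eqP <- /eqP <-] _]; lia.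
Qed.

Lemma npaths_below k r m n l x y : y <= k * x - r -> npaths k r m n l x y = 0%N.
Proof.
by move=> below; case: l => [|l]; rewrite ?npaths0 ?npathsS ltNge below ?andbF.
Qed.

Lemma npaths_ballot_sum k r m n : 0 <= k -> k * m - r < n -> forall (l : nat) (x y : int),
  x <= m -> y <= n -> (m - x) + (n - y) = l%:Z -> k * x - r < y ->
  (npaths k r m n l x y)%:Z = ballot_sum k `|(m - x)%R|%N (n - y) (y + r - 1 - k * x).
Proof.
move=> k_ge0 target_above; elim=> [|l IH] x y x_le y_le dist above.
  have [-> ->] : x = m /\ y = n by lia.
  by rewrite npaths0 !eqxx subrr ballot_sum_M0 /= ?above //; lia.
rewrite npathsS above PoszD.
have [x_eq|x_neq] := eqVneq x m.
  by subst x; rewrite npaths_beyond ?ltrDl // add0r IH ?subrr ?ballot_sum_M0 //; lia.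
have [M eM] : exists M : nat, m - x = M.+1%:Z.
  by exists `|(m - x - 1)%R|%N; rewrite intS gez0_abs; lia.
rewrite eM /=.
have east : (npaths k r m n l (x + 1) y)%:Z = ballot_sum k M (n - y) (y + r - 1 - k * x - k).
  have [above'|below'] := ltP (k * (x + 1) - r) y.
    rewrite IH; try lia.
    have -> : m - (x + 1) = M%:Z by lia.
    by congr ballot_sum; ring.
  by rewrite npaths_below // ballot_sum_below //; lia.
have [y_eq|y_neq] := eqVneq y n.
  subst y; rewrite (@npaths_beyond _ _ _ _ _ x (n + 1)) ?ltrDl ?orbT // addr0 east subrr.
  by rewrite !ballot_sum_last_row //; nia.
rewrite east IH; try lia.
rewrite eM ballot_sum_step; last by lia.
by congr (_ + ballot_sum _ _ _ _); ring.
Qed.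

Theorem corollary2p1 (k r a b m n : int) :
  1 <= k -> 0 <= a -> a <= m -> Num.max 0 (k * a - r) < b -> b <= n ->
  k * m - r < n ->
  (#|Lpaths k r a b m n|)%:R =
  \sum_(0 <= i < `|((b + r - 1 - k * a) %/ (k + 1))%Z|.+1)
     (-1) ^+ i *
     ((n + r - k * m)%:~R / (m + n + r - (k + 1) * (a + i%:Z))%:~R) *
     (binz (m + n + r - (k + 1) * (a + i%:Z)) (m - a - i%:Z))%:~R *
     (binz (b + r - 1 - k * (a + i%:Z)) i%:Z)%:~R :> rat.
Proof.
move=> k_ge1 a_ge0 a_le_m; rewrite gt_max => /andP [b_gt0 b_above] b_le_n target_above.
have k_ge0 : 0 <= k by lia.
have steps : (m - a) + (n - b) = (nsteps a b m n)%:Z by rewrite /nsteps PoszD !gez0_abs //; lia.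
have count := @npaths_ballot_sum k r m n k_ge0 target_above _ a b a_le_m b_le_n steps b_above.
rewrite -[#|_|]/(npaths k r m n (nsteps a b m n) a b) -[_%:R]/((_%:Z)%:~R) count.
rewrite ballot_sumE ?gez0_abs ?big_mkord; try lia.
apply: eq_bigr => i _.
have e1 : n - b + (b + r - 1 - k * a) + 1 - k * (m - a) = n + r - k * m by ring.
have e2 : m - a - i%:Z + (n - b + (b + r - 1 - k * a) + 1 - k * i%:Z) =
  m + n + r - (k + 1) * (a + i%:Z) by ring.
have e3 : b + r - 1 - k * a - k * i%:Z = b + r - 1 - k * (a + i%:Z) by ring.
by rewrite e1 e2 e3.
Qed.
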